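(* Let $p>3$ and $q>6p^4$ be primes, $G=\mathbb{Z}_6^5\times\mathbb{Z}_q$, $H=\mathbb{Z}_p^4$, let $A\subset G$ be the set defined in the context (which is a tile of $G$) and let $B\subset H$ be a spectral set with $|B|=2p$. Then for every map $t:A\to H$, the set $P_t=\bigcup_{a\in A}\{a\}\times(t(a)+B)$ pd-tiles $G\times H$ weakly.
   Context: For a finite abelian group $E$, a set $X\subset E$ pd-tiles $E$ (weakly) if there is a nonnegative function $h:E\to\mathbb{R}$ with $h(0)=1$, $1_X*h=1_E$ (convolution), and $\hat h\ge 0$, where $\hat f(\gamma)=\sum_{x\in E}f(x)\gamma(x)$ for characters $\gamma$. Known fact (may be used): in a finite abelian group, every tile and every spectral set pd-tiles the group; the set $A$ below tiles $G$. A set $X$ is spectral if there is a set $S$ of characters with $|S|=|X|$ and $\hat 1_X(s-s')=0$ for distinct $s,s'\in S$; it is a tile if there is $\Lambda$ with $X+\Lambda=E$ with each element uniquely represented. Construction of $A$: let $v=(1,2,3,4,5)\in\mathbb{Z}_6^5$; for $\pi\in S_5$ let $\pi(v)$ be the vector with permuted coordinates and $A_\pi=\{x\in\mathbb{Z}_6^5:\langle \pi(v),x\rangle\equiv 0\pmod 6\}$. Enumerate $S_5$ as $\pi_0,\dots,\pi_{119}$; for $0\le k\le119$ set $A_k=A_{\pi_k}\times\{k\}$, for $120\le k\le q-1$ set $A_k=A_{\pi_0}\times\{k\}$, and $A=\bigcup_{k=0}^{q-1}A_k$. *)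

From HB Require Import structures.
From mathcomp Require Import all_boot all_order all_algebra perm algC.
Set Implicit Arguments. Unset Strict Implicit. Unset Printing Implicit Defensive.
Import Order.TTheory GRing.Theory Num.Theory.
Local Open Scope ring_scope.

(* Complex-valued functions are valued in algC (algebraic complex numbers);
   for z : algC, [0 <= z] means z is real and nonnegative. *)

Definition is_character (E : finZmodType) (g : E -> algC) : Prop :=
  g 0 = 1 /\ forall x y : E, g (x + y) = g x * g y.

Definition fourier (E : finZmodType) (f : E -> algC) (g : E -> algC) : algC :=
  \sum_(x : E) f x * g x.

Definition indicator (E : finZmodType) (X : {set E}) (x : E) : algC :=
  (x \in X)%:R.

Definition conv (E : finZmodType) (f h : E -> algC) (x : E) : algC :=
  \sum_(y : E) f y * h (x - y).

Definition pd_tiles (E : finZmodType) (X : {set E}) : Prop :=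
  exists h : E -> algC,
    [/\ forall x, 0 <= h x,
        h 0 = 1,
        forall x, conv (indicator X) h x = 1
      & forall g, is_character g -> 0 <= fourier h g].

(* Difference of characters in the (additively written) dual group. *)
Definition char_sub (E : finZmodType) (s s' : E -> algC) (x : E) : algC :=
  s x / s' x.

(* X is spectral: there is a family S = {s_0,...,s_{|X|-1}} of characters,
   with |S| = |X|, such that \hat 1_X (s - s') = 0 for distinct s, s' in S.
   (Distinctness of the s_i follows from the orthogonality when X <> set0.) *)
Definition spectral (E : finZmodType) (X : {set E}) : Prop :=
  exists S : 'I_#|X| -> (E -> algC),
    (forall i, is_character (S i)) /\
    (forall i j, i != j -> fourier (indicator X) (char_sub (S i) (S j)) = 0).

Definition GZ6 := 'rV['Z_6]_5.
Definition Gtype (q : nat) := (GZ6 * 'Z_q)%type.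
Definition Htype (p : nat) := 'rV['Z_p]_4.

(* A_pi = { x in Z_6^5 : < pi(v), x > = 0 mod 6 },  v = (1,2,3,4,5),
   pi(v)_i = v_{pi(i)}. *)
Definition Api (pi : 'S_5) : {set GZ6} :=
  [set x : GZ6 | \sum_(i < 5) ((pi i).+1)%:R * x ord0 i == 0].

(* Given an enumeration e : 'I_120 -> 'S_5 of S_5 (pi_k = e k), the set
   A = U_k A_k, A_k = A_{pi_k} x {k} for k < 120, A_{pi_0} x {k} otherwise. *)
Definition pi_of (e : 'I_120 -> 'S_5) (k : nat) : 'S_5 :=
  if (k < 120)%N then e (inord k) else e ord0.

Definition setA (q : nat) (e : 'I_120 -> 'S_5) : {set Gtype q} :=
  [set a : Gtype q | a.1 \in Api (pi_of e (val a.2))].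

Definition Etype (q p : nat) := (Gtype q * Htype p)%type.
HB.instance Definition _ (q p : nat) := GRing.Zmodule.on (Etype q p).
HB.instance Definition _ (q p : nat) := Finite.on (Etype q p).

Definition Pt (q p : nat) (e : 'I_120 -> 'S_5) (B : {set Htype p})
    (t : Gtype q -> Htype p) : {set Etype q p} :=
  [set z : Etype q p | (z.1 \in setA q e) && (z.2 - t z.1 \in B)].

(* A tile [X] with translation set [Lam] (and [0 \in X])
   pd-tiles with [h = |Lam|^-1 1_Lam * 1_(-Lam)], whose Fourier transform is
   [|Lam|^-1 |hat 1_Lam|^2].  A spectral set [X] with spectrum [S] pd-tiles
   with [h = |X|^-2 |sum_(s in S) s|^2]: orthogonality of the spectrum gives
   [1_X * h = 1], and [hat h] is a nonnegative combination of character sums.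
   Finally, if [h_A] and [h_B] witness that [A] and [B] pd-tile, then
   [h_A (x) h_B] witnesses that [P_t] pd-tiles [G x H]: convolving first along
   the fibre over [a] absorbs the shift [t a].  The set [A] is a tile, with
   translation set [{0} \cup {e_i}] of weights [{0, 1, ..., 5} = Z_6]. *)

From Pilot Require Import Defs.
From HB Require Import structures.
From mathcomp Require Import all_boot all_order all_algebra perm algC.
Set Implicit Arguments. Unset Strict Implicit. Unset Printing Implicit Defensive.
Import Order.TTheory GRing.Theory Num.Theory.
Local Open Scope ring_scope.

Lemma sum_mul_eq (I : finType) (F : I -> algC) j :
  \sum_i F i * (i == j)%:R = F j.
Proof.
rewrite (bigD1 j) //= eqxx mulr1 big1 ?addr0 // => i /negbTE ->.
by rewrite mulr0.
Qed.

Lemma sum_inj_card_onto (I J : finType) (f : I -> J) c :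
  injective f -> (#|J| <= #|I|)%N -> \sum_i ((f i == c)%:R : algC) = 1.
Proof.
move=> f_inj cardJI; have /codomP [i ->] := inj_card_onto f_inj cardJI c.
rewrite (eq_bigr (fun j => 1 * (j == i)%:R)) ?sum_mul_eq // => j _.
by rewrite inj_eq // mul1r.
Qed.

Section Characters.
Variable E : finZmodType.
Implicit Types (f h g : E -> algC) (X : {set E}).

Lemma char_neq0 g x : is_character g -> g x != 0.
Proof.
move=> [g0 gD]; apply/eqP => gx0.
by move: (gD x (- x)); rewrite subrr g0 gx0 mul0r => /eqP; rewrite oner_eq0.
Qed.

Lemma charN g x : is_character g -> g (- x) = (g x)^-1.
Proof.
move=> gc; apply: (mulfI (char_neq0 x gc)).
by rewrite -gc.2 subrr gc.1 mulfV ?char_neq0.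
Qed.

Lemma charB g x y : is_character g -> g (x - y) = g x / g y.
Proof. by move=> gc; rewrite gc.2 charN. Qed.

Lemma char_norm1 g x : is_character g -> `|g x| = 1.
Proof.
move=> [g0 gD]; set T := \sum_y `|g y|.
have T_gt0 : 0 < T by rewrite /T (bigD1 0) //= g0 normr1 ltr_pwDl ?sumr_ge0.
have : T = `|g x| * T.
  rewrite /T {1}(reindex_inj (addrI x)) mulr_sumr.
  by apply: eq_bigr => y _; rewrite gD normrM.
by rewrite -{1}[T]mul1r => /(mulIf (lt0r_neq0 T_gt0)).
Qed.

Lemma char_conjC g x : is_character g -> (g x)^* = (g x)^-1.
Proof.
move=> gc; apply: (mulfI (char_neq0 x gc)).
by rewrite -normCK char_norm1 // expr1n mulfV ?char_neq0.
Qed.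

Lemma char_mul g1 g2 : is_character g1 -> is_character g2 ->
  is_character (fun x => g1 x * g2 x).
Proof.
move=> [g10 g1D] [g20 g2D]; split=> [|x y]; first by rewrite g10 g20 mulr1.
by rewrite g1D g2D mulrACA.
Qed.

Lemma char_sub_char g1 g2 : is_character g1 -> is_character g2 ->
  is_character (char_sub g1 g2).
Proof.
move=> g1c [g20 g2D]; apply: char_mul => //; split=> [|x y].
  by rewrite g20 invr1.
by rewrite g2D invfM.
Qed.

(* The sum is [#|E|] for the trivial character and [0] otherwise. *)
Lemma char_sum_ge0 g : is_character g -> 0 <= \sum_x g x.
Proof.
move=> [g0 gD]; have [g1 | /forallPn [y gy_neq1]] := boolP [forall x, g x == 1].
  rewrite (eq_bigr (fun=> 1)) ?sumr_const ?ler0n // => x _.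
  by apply/eqP; move/forallP: g1.
suff -> : \sum_x g x = 0 by [].
have sumE : \sum_x g x = g y * \sum_x g x.
  rewrite {1}(reindex_inj (addrI y)) mulr_sumr.
  by apply: eq_bigr => x _; rewrite gD.
have /eqP : (1 - g y) * \sum_x g x = 0 by rewrite mulrBl mul1r -sumE subrr.
by rewrite mulf_eq0 subr_eq0 eq_sym (negbTE gy_neq1) => /eqP.
Qed.

Lemma sum_indicator X f : \sum_y indicator X y * f y = \sum_(y in X) f y.
Proof.
rewrite [RHS]big_mkcond; apply: eq_bigr => y _.
by rewrite /indicator; case: (y \in X); rewrite ?mul1r ?mul0r.
Qed.

Lemma convZ f h c x : conv f (fun y => c * h y) x = c * conv f h x.
Proof. by rewrite /conv mulr_sumr; apply: eq_bigr => y _; rewrite mulrCA. Qed.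

Lemma conv_sum (I : finType) f (h : I -> E -> algC) x :
  conv f (fun y => \sum_i h i y) x = \sum_i conv f (h i) x.
Proof.
rewrite /conv exchange_big; apply: eq_bigr => y _; exact: mulr_sumr.
Qed.

Lemma fourierZ h c g : fourier (fun y => c * h y) g = c * fourier h g.
Proof. by rewrite /fourier mulr_sumr; apply: eq_bigr => y _; rewrite mulrA. Qed.

Lemma fourier_sum (I : finType) (h : I -> E -> algC) g :
  fourier (fun y => \sum_i h i y) g = \sum_i fourier (h i) g.
Proof.
rewrite /fourier exchange_big; apply: eq_bigr => y _; exact: mulr_suml.
Qed.

Lemma conv_char g f x : is_character g ->
  conv f g x = g x * fourier f (fun y => (g y)^-1).
Proof.
move=> gc; rewrite /conv /fourier mulr_sumr; apply: eq_bigr => y _.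
by rewrite charB // mulrCA.
Qed.

Lemma conv_delta f d x : conv f (fun y => (y == d)%:R) x = f (x - d).
Proof.
rewrite /conv (eq_bigr (fun y => f y * (y == x - d)%:R)) ?sum_mul_eq // => y _.
by congr (_ * (_ : bool)%:R); apply/eqP/eqP => [<-|->]; rewrite ?subKr.
Qed.

Lemma fourier_delta d g : fourier (fun y => (y == d)%:R) g = g d.
Proof.
rewrite /fourier (eq_bigr (fun y => g y * (y == d)%:R)) ?sum_mul_eq // => y _.
by rewrite mulrC.
Qed.

Lemma spectral_pd_tiles X : spectral X -> X != set0 -> pd_tiles X.
Proof.
case=> S [Sc S_orth] X_neq0; set N : algC := #|X|%:R.
have N_neq0 : N != 0 by rewrite pnatr_eq0 cards_eq0.
have orth i j : fourier (indicator X) (char_sub (S i) (S j)) = (i == j)%:R * N.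
  have [<- | /S_orth ->] := eqVneq; last by rewrite mul0r.
  rewrite mul1r /fourier sum_indicator (eq_bigr (fun=> 1)) ?sumr_const // => y _.
  by rewrite /char_sub divff ?char_neq0.
have sum_N : \sum_(i < #|X|) N = N ^+ 2 by rewrite sumr_const card_ord -mulr_natr.
have N2_neq0 : N ^+ 2 != 0 by rewrite expf_neq0.
exists (fun x => (N ^+ 2)^-1 * \sum_i \sum_j char_sub (S i) (S j) x); split.
- move=> x; rewrite mulr_ge0 ?invr_ge0 ?exprn_ge0 ?ler0n //.
  rewrite (eq_bigr (fun i => S i x * (\sum_j S j x)^*)).
    by rewrite -mulr_suml mul_conjC_ge0.
  move=> i _; rewrite rmorph_sum mulr_sumr; apply: eq_bigr => j _.
  by rewrite /char_sub -char_conjC.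
- rewrite (eq_bigr (fun=> N)) ?sum_N ?mulVf // => i _.
  rewrite (eq_bigr (fun=> 1)) ?sumr_const ?card_ord // => j _.
  by rewrite /char_sub (Sc i).1 (Sc j).1 divr1.
- move=> x; rewrite convZ conv_sum.
  rewrite (eq_bigr (fun=> N)) ?sum_N ?mulVf // => i _.
  have conv_S j : conv (indicator X) (char_sub (S i) (S j)) x
      = char_sub (S i) (S j) x * (j == i)%:R * N.
    rewrite (conv_char _ _ (char_sub_char (Sc i) (Sc j))) -mulrA -orth.
    by congr (_ * _); apply: eq_bigr => y _; rewrite /char_sub invf_div.
  rewrite conv_sum (bigD1 i) //= big1 ?addr0 => [|j /negbTE ji].
    by rewrite conv_S eqxx mulr1 /char_sub divff ?mul1r ?char_neq0.
  by rewrite conv_S ji mulr0 mul0r.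
- move=> g gc; rewrite fourierZ fourier_sum mulr_ge0 ?invr_ge0 ?exprn_ge0 ?ler0n //.
  rewrite sumr_ge0 // => i _; rewrite fourier_sum sumr_ge0 // => j _.
  by apply/char_sum_ge0/char_mul => //; apply: char_sub_char.
Qed.

Lemma tiling_inj (I : finType) (lam : I -> E) X :
  0 \in X -> (forall y, \sum_i indicator X (y - lam i) = 1) -> injective lam.
Proof.
move=> X0 tiling i j lam_ij; apply: contra_eq (tiling (lam i)) => ij.
rewrite (bigD1 i) //= (bigD1 j) 1?eq_sym //= -lam_ij subrr /indicator X0 addrA.
rewrite eq_sym -subr_eq0 addrAC addrK paddr_eq0 ?oner_eq0 ?ler01 ?sumr_ge0 //.
Qed.

Lemma tile_pd_tiles (I : finType) (lam : I -> E) X :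
  0 \in X -> (forall y, \sum_i indicator X (y - lam i) = 1) -> pd_tiles X.
Proof.
move=> X0 tiling; have lam_inj := tiling_inj X0 tiling.
set N : algC := #|I|%:R.
have N_neq0 : N != 0.
  rewrite pnatr_eq0 -lt0n; apply/card_gt0P; apply/existsP; apply: contraT.
  rewrite negb_exists => /forallP I0; move: (tiling 0).
  by rewrite big1 => [/eqP|i _]; [rewrite eq_sym oner_eq0 | have := I0 i].
exists (fun z => N^-1 * \sum_i \sum_j (z == lam i - lam j)%:R); split.
- move=> z; rewrite mulr_ge0 ?invr_ge0 ?ler0n ?sumr_ge0 // => i _.
  by rewrite sumr_ge0 // => j _; rewrite ler0n.
- rewrite (eq_bigr (fun=> 1)) ?sumr_const ?mulVf // => i _.
  under eq_bigr => j _ do rewrite eq_sym subr_eq0 (inj_eq lam_inj) eq_sym -[_%:R]mul1r.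
  by rewrite sum_mul_eq.
- move=> x; rewrite convZ conv_sum.
  under eq_bigr => i _ do rewrite conv_sum.
  under eq_bigr => i _ do under eq_bigr => j _ do rewrite conv_delta opprB addrA.
  rewrite exchange_big (eq_bigr (fun=> 1)) => [|j _]; last exact: tiling.
  by rewrite sumr_const mulVf.
- move=> g gc; rewrite fourierZ fourier_sum mulr_ge0 ?invr_ge0 ?ler0n //.
  under eq_bigr => i _ do rewrite fourier_sum.
  under eq_bigr => i _ do under eq_bigr => j _ do
    rewrite fourier_delta charB // -char_conjC //.
  under eq_bigr => i _ do rewrite -mulr_sumr.
  by rewrite -mulr_suml -rmorph_sum mul_conjC_ge0.
Qed.

End Characters.

HB.instance Definition _ (G H : finZmodType) := GRing.Zmodule.on (G * H)%type.

Section Product.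
Variables G H : finZmodType.
Implicit Types g : G * H -> algC.

Lemma pairD (a b : G) (x y : H) : ((a, x) + (b, y) : G * H) = (a + b, x + y).
Proof. by []. Qed.

Lemma pairB (a b : G) (x y : H) : ((a, x) - (b, y) : G * H) = (a - b, x - y).
Proof. by []. Qed.

Lemma char_pairE g a x : is_character g -> g (a, x) = g (a, 0) * g (0, x).
Proof. by case=> _ gD; rewrite -gD pairD addr0 add0r. Qed.

Lemma char_fst g : is_character g -> is_character (fun a : G => g (a, 0)).
Proof. by case=> g0 gD; split=> // a b; rewrite -gD pairD addr0. Qed.

Lemma char_snd g : is_character g -> is_character (fun x : H => g (0, x)).
Proof. by case=> g0 gD; split=> // x y; rewrite -gD pairD addr0. Qed.

Lemma fourier_pair (f1 : G -> algC) (f2 : H -> algC) g : is_character g ->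
  fourier (fun z => f1 z.1 * f2 z.2) g
  = fourier f1 (fun a => g (a, 0)) * fourier f2 (fun x => g (0, x)).
Proof.
move=> gc; rewrite /fourier mulr_suml.
under [RHS]eq_bigr => a _ do rewrite mulr_sumr.
rewrite pair_bigA; apply: eq_bigr => [[a x]] _ /=.
by rewrite char_pairE // mulrACA.
Qed.

Lemma twisted_prod_pd_tiles (X : {set G}) (Y : {set H}) (t : G -> H) :
  pd_tiles X -> pd_tiles Y ->
  pd_tiles [set z : G * H | (z.1 \in X) && (z.2 - t z.1 \in Y)].
Proof.
case=> [hX [hX_ge0 hX0 hX_conv hX_fourier]] [hY [hY_ge0 hY0 hY_conv hY_fourier]].
exists (fun z => hX z.1 * hY z.2); split=> [z||[a0 x0]|g gc].
- exact: mulr_ge0.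
- by rewrite hX0 hY0 mulr1.
- rewrite -(hX_conv a0) /conv.
  under [RHS]eq_bigr => a _ do
    rewrite -(mulr1 (_ * hX _)) -(hY_conv (x0 - t a)) /conv mulr_sumr
            (reindex_inj (addIr (- t a))).
  rewrite pair_bigA; apply: eq_bigr => [[a x]] _ /=.
  by rewrite /indicator inE /= opprB addrA subrK mulrACA -mulnb natrM.
- rewrite fourier_pair //.
  by apply: mulr_ge0; [apply/hX_fourier/char_fst | apply/hY_fourier/char_snd].
Qed.

End Product.

Definition vdot (pi : 'S_5) (x : GZ6) : 'Z_6 :=
  \sum_(i < 5) ((pi i).+1)%:R * x ord0 i.

Lemma vdotB pi x y : vdot pi (x - y) = vdot pi x - vdot pi y.
Proof. by rewrite /vdot -sumrB; apply: eq_bigr => i _; rewrite !mxE mulrBr. Qed.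

Lemma vdot0 pi : vdot pi 0 = 0.
Proof. by rewrite -(subrr 0) vdotB subrr. Qed.

Lemma vdot_delta pi i : vdot pi (delta_mx ord0 i) = ((pi i).+1)%:R.
Proof.
rewrite /vdot (bigD1 i) //= mxE !eqxx mulr1 big1 ?addr0 // => j /negbTE ji.
by rewrite mxE ji andbF mulr0.
Qed.

Definition basis_or0 (o : option 'I_5) : GZ6 :=
  if o is Some i then delta_mx ord0 i else 0.

(* The weights are [0] and the distinct [pi i + 1] in [1..5]: all of [Z_6]. *)
Lemma vdot_basis_or0_inj pi : injective (fun o => vdot pi (basis_or0 o)).
Proof.
have val_small n : (n < 6)%N -> nat_of_ord (n%:R : 'Z_6) = n.
  by move=> n_lt6; rewrite val_Zp_nat // modn_small.
move=> [i|] [j|] /=; rewrite ?vdot_delta ?vdot0 => /(congr1 (@nat_of_ord _)).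
all: rewrite ?val_small //; try by rewrite ltnS ltn_ord.
by move=> [/val_inj/perm_inj ->].
Qed.

Lemma setA_pd_tiles q e : pd_tiles (setA q e : {set GZ6 * 'Z_q}).
Proof.
apply: (@tile_pd_tiles _ _ (fun o => (basis_or0 o, 0))) => [|[x k]].
  by rewrite !inE -/(vdot _ _) vdot0.
set pi := Defs.pi_of e k.
rewrite -(@sum_inj_card_onto _ _ _ (vdot pi x) (@vdot_basis_or0_inj pi)); last first.
  by rewrite card_option !card_ord.
apply: eq_bigr => o _; rewrite /indicator !inE pairB subr0 -/(vdot _ _) vdotB.
by rewrite subr_eq0 eq_sym.
Qed.

Local Close Scope ring_scope.

Theorem lemma3p3 (p q : nat) (e : 'I_120 -> 'S_5) (B : {set Htype p})
    (t : Gtype q -> Htype p) :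
  prime p -> 3 < p -> prime q -> 6 * p ^ 4 < q ->
  bijective e ->
  spectral B -> #|B| = 2 * p ->
  pd_tiles (Pt e B t).
Proof.
move=> p_prime _ _ _ _ B_spectral B_card.
have B_neq0 : B != set0 by rewrite -cards_eq0 B_card muln_eq0 -lt0n prime_gt0.
exact: twisted_prod_pd_tiles t (setA_pd_tiles q e)
                             (spectral_pd_tiles B_spectral B_neq0).
Qed.
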